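(* Let $G$ be a graph, $t$ an integer and $k$ a nonnegative integer. For a set of vertices $X$, let $E_X$ denote the set of all pairs $\{u,v\}$ with $u,v\in X$, $u\neq v$. Start with $\mathcal{F}=\{E_X : X \text{ is a clique of size } t \text{ in } G\}$ and repeatedly apply the following rule until it is no longer applicable: if there is an edge $\{x,y\}$ of $G$ such that $\mathcal{F}_{xy}=\{X\subseteq V(G)\setminus\{x,y\} : E_{X\cup\{x,y\}}\in\mathcal{F}\}$ satisfies $|\mathcal{F}_{xy}|>2\cdot(t-2)!\cdot k^{t-2}$, find distinct sets $X_1,\ldots,X_{k+1}\in\mathcal{F}_{xy}$ forming a sunflower with core $Y$, remove from $\mathcal{F}$ every set $E_Z$ with $Y\cup\{x,y\}\subseteq Z$, and add $E_{Y\cup\{x,y\}}$ to $\mathcal{F}$. Let $\mathcal{F}'$ be the resulting family. Build a graph $G'=(V',E')$ as follows: start with $V'=E'=\emptyset$; for every $E_X\in\mathcal{F}'$, if $|X|=t$ set $V'\gets V'\cup X$ and $E'\gets E'\cup E_X$; if $|X|<t$, let $V_X$ be a set of $t-|X|$ new vertices and set $V'\gets V'\cup X\cup V_X$ and $E'\gets E'\cup E_{X\cup V_X}$. Then $(G,k)$ is a yes-instance of $K_t$-free edge deletion if and only if $(G',k)$ is a yes-instance of $K_t$-free edge deletion.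
   Context: In the $K_t$-free edge deletion problem, the input is a graph $G$ and an integer $k$, and the question is whether there is a set of at most $k$ edges of $G$ whose removal leaves a graph with no clique on $t$ vertices. Distinct sets $S_1,\ldots,S_p$ form a sunflower with core $Y$ if $S_i\cap S_j=Y$ for all $i\neq j$ and $S_i\setminus Y\neq\emptyset$ for every $i$; when the rule above is applicable, such a sunflower of $k+1$ sets exists by the sunflower lemma. *)

From mathcomp Require Import all_boot.
Set Implicit Arguments. Unset Strict Implicit. Unset Printing Implicit Defensive.

Definition EX (T : finType) (X : {set T}) : {set {set T}} :=
  [set e : {set T} | (e \subset X) && (#|e| == 2)].

Definition simple_graph (T : finType) (Vs : {set T}) (Es : {set {set T}}) :=
  forall e, e \in Es -> #|e| = 2 /\ e \subset Vs.

Definition is_clique (T : finType) (Vs : {set T}) (Es : {set {set T}})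
    (t : nat) (X : {set T}) :=
  [/\ X \subset Vs, #|X| = t & EX X \subset Es].

Definition Kt_free_del_yes (T : finType) (Vs : {set T}) (Es : {set {set T}})
    (t k : nat) :=
  exists S : {set {set T}}, [/\ S \subset Es, #|S| <= k &
    forall X : {set T}, ~ is_clique Vs (Es :\: S) t X].

Definition sunflower (T : finType) (m : nat) (Xs : 'I_m -> {set T}) (Y : {set T}) :=
  [/\ injective Xs,
      forall i j, i != j -> Xs i :&: Xs j = Y &
      forall i, Xs i :\: Y != set0].

Section Reduction.
Variables (V : finType) (EG : {set {set V}}) (t k : nat).

Definition F_init : {set {set {set V}}} :=
  [set EX X | X in [set X : {set V} | (#|X| == t) && (EX X \subset EG)]].

Definition Fxy (F : {set {set {set V}}}) (x y : V) : {set {set V}} :=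
  [set X : {set V} | (X \subset ~: [set x; y]) && (EX (X :|: [set x; y]) \in F)].

Definition rule_step (F F' : {set {set {set V}}}) : Prop :=
  exists (x y : V) (Xs : 'I_k.+1 -> {set V}) (Y : {set V}),
    [/\ [set x; y] \in EG,
        #|Fxy F x y| > 2 * (t - 2)`! * k ^ (t - 2),
        (forall i, Xs i \in Fxy F x y),
        sunflower Xs Y &
        F' = [set e in F | ~~ [exists Z : {set V},
                                 (Y :|: [set x; y] \subset Z) && (e == EX Z)]]
             :|: [set EX (Y :|: [set x; y])]].

Definition rule_applicable (F : {set {set {set V}}}) : Prop :=
  exists (x y : V) (Xs : 'I_k.+1 -> {set V}) (Y : {set V}),
    [/\ [set x; y] \in EG,
        #|Fxy F x y| > 2 * (t - 2)`! * k ^ (t - 2),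
        (forall i, Xs i \in Fxy F x y) &
        sunflower Xs Y].

Definition result_family (F' : {set {set {set V}}}) : Prop :=
  exists (n : nat) (F : nat -> {set {set {set V}}}),
    [/\ F 0 = F_init,
        (forall i, i < n -> rule_step (F i) (F i.+1)),
        F n = F' &
        ~ rule_applicable F'].

(* Vertex type of G': old vertices plus fresh vertices (X, i) *)
Definition Wtype : finType := (V + ({set V} * 'I_t))%type.

Definition newV (X : {set V}) : {set Wtype} :=
  [set inr (X, i) | i : 'I_t & i < t - #|X|].

Definition liftV (X : {set V}) : {set Wtype} := inl @: X.

Definition Gp_V (F' : {set {set {set V}}}) : {set Wtype} :=
  (\bigcup_(X : {set V} | (EX X \in F') && (#|X| == t)) liftV X) :|:
  (\bigcup_(X : {set V} | (EX X \in F') && (#|X| < t)) (liftV X :|: newV X)).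

Definition Gp_E (F' : {set {set {set V}}}) : {set {set Wtype}} :=
  (\bigcup_(X : {set V} | (EX X \in F') && (#|X| == t)) EX (liftV X)) :|:
  (\bigcup_(X : {set V} | (EX X \in F') && (#|X| < t)) EX (liftV X :|: newV X)).

End Reduction.

From mathcomp Require Import all_boot.
Set Implicit Arguments. Unset Strict Implicit. Unset Printing Implicit Defensive.

(* If [S] is a solution for [G], every member of the family stays a set of edges of [G] met
   by [S]: the new member [E_(Y + {x,y})] is met, since the [k+1] petal cliques
   [E_(X_i + {x,y})] pairwise share only edges of [E_(Y + {x,y})], so missing it would cost
   [S] at least [k+1] edges.  A [t]-clique of [G'] is either a padded block [X + V_X] with
   [E_X] in the family or a [t]-clique of [G], so the copies of the edges of [S] solve [G'].
   Conversely, every [t]-clique of [G] keeps containing some [W] with [1 < #|W|] and [E_W] in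
   the family; the padded block [W + V_W] is a [t]-clique of [G'], and sending each edge of a
   solution of [G'] inside it to an edge of [W] yields a solution of [G]. *)

Section Pairs.
Variable T : finType.
Implicit Types (A B e : {set T}) (x y : T).

Lemma in_EX e A : (e \in EX A) = (e \subset A) && (#|e| == 2).
Proof. by rewrite inE. Qed.

Lemma EXS A B : A \subset B -> EX A \subset EX B.
Proof.
move=> sAB; apply/subsetP=> e; rewrite !in_EX => /andP[seA ->].
by rewrite (subset_trans seA sAB).
Qed.

Lemma EXI A B : EX (A :&: B) = EX A :&: EX B.
Proof. by apply/setP=> e; rewrite !inE subsetI andbACA andbb. Qed.

Lemma set2_EX x y A : x != y -> ([set x; y] \in EX A) = (x \in A) && (y \in A).
Proof. by move=> nxy; rewrite in_EX cards2 nxy subUset !sub1set andbT. Qed.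

Lemma EX_subset A B : 1 < #|A| -> EX A \subset EX B -> A \subset B.
Proof.
move=> A2 sAB; apply/subsetP=> x xA.
have /card_gt0P[y /setD1P[nyx yA]] : 0 < #|A :\ x| by rewrite (cardsD1 x) xA in A2.
have /(subsetP sAB) : [set x; y] \in EX A by rewrite set2_EX 1?eq_sym ?xA.
by rewrite set2_EX 1?eq_sym // => /andP[].
Qed.

End Pairs.

Lemma EX_imset (T U : finType) (h : T -> U) (e A : {set T}) :
  injective h -> e \in EX A -> h @: e \in EX (h @: A).
Proof. by move=> h_inj; rewrite !in_EX (card_imset _ h_inj) => /andP[/imsetS ->]. Qed.

Lemma leq_card_transversal (T : finType) m (A : 'I_m -> {set T}) (S : {set T}) :
  (forall i j, i != j -> [disjoint A i & A j]) ->
  (forall i, ~~ [disjoint A i & S]) -> m <= #|S|.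
Proof.
move=> disjA meetS.
have /all_sig[g gP] i : {x | x \in A i :&: S}.
  by apply/sigW/set0Pn; rewrite setI_eq0.
have g_inj : injective g.
  move=> i j gij; apply/eqP; apply: contraT => nij.
  have /setIP[gi _] := gP i; have /setIP[gj _] := gP j.
  by move: gj; rewrite -gij (disjointFr (disjA _ _ nij) gi).
rewrite -[m]card_ord -(card_imset _ g_inj) subset_leq_card //.
by apply/subsetP=> _ /imsetP[i _ ->]; have /setIP[] := gP i.
Qed.

Lemma sunflower_core_hit (T : finType) m (Xs : 'I_m -> {set T}) Y Z (S : {set {set T}}) :
  sunflower Xs Y -> #|S| < m ->
  (forall i, ~~ [disjoint EX (Xs i :|: Z) & S]) -> ~~ [disjoint EX (Y :|: Z) & S].
Proof.
move=> [_ XsI _] ltSm meetS; apply/negP=> disjYS.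
suff : m <= #|S| by rewrite leqNgt ltSm.
apply: (@leq_card_transversal _ _ (fun i => EX (Xs i :|: Z) :\: EX (Y :|: Z))).
  by move=> i j nij; rewrite -setI_eq0 -setDIl -EXI -setUIl XsI // setDv.
move=> i; have := meetS i; rewrite -!setI_eq0 => /set0Pn[f /setIP[fX fS]].
apply/set0Pn; exists f; rewrite in_setI in_setD fX fS !andbT.
by apply/negP=> fY; rewrite (disjointFr disjYS fY) in fS.
Qed.

Lemma leq_card_imsetI (aT rT : finType) (h : aT -> rT) (S : {set aT}) (E : {set rT}) k :
  #|S| <= k -> #|h @: S :&: E| <= k.
Proof.
move=> leSk; apply: leq_trans (subset_leq_card (subsetIl _ _)) _.
exact: leq_trans (leq_imset_card _ _) leSk.
Qed.

Lemma solution_meets_clique (T : finType) (Vs : {set T}) (Es S : {set {set T}}) t X :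
  (forall X, ~ is_clique Vs (Es :\: S) t X) -> is_clique Vs Es t X ->
  ~~ [disjoint EX X & S].
Proof.
move=> freeS [sXV cX sXE]; apply/negP=> disjXS.
by apply: (freeS X); split; rewrite // subsetD sXE.
Qed.

Lemma is_cliqueS (T : finType) (Vs : {set T}) (Es Es' : {set {set T}}) t X :
  Es \subset Es' -> is_clique Vs Es t X -> is_clique Vs Es' t X.
Proof. by move=> sEs [sXV cX sXE]; split; rewrite // (subset_trans sXE). Qed.

Section Invariants.
Variables (V : finType) (EG : {set {set V}}) (t k : nat).
Implicit Types (F : {set {set {set V}}}) (S : {set {set V}}) (X : {set V}).

Lemma result_family_ind (P : {set {set {set V}}} -> Prop) F' :
  P (F_init EG t) -> (forall F F'', rule_step EG t k F F'' -> P F -> P F'') ->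
  result_family EG t k F' -> P F'.
Proof.
move=> P0 PS [n [F [F0 Fstep <- _]]].
elim: n Fstep => [|n IHn] Fstep; first by rewrite F0.
by apply: (PS (F n)); [apply: Fstep | apply: IHn => i /ltnW/Fstep].
Qed.

Definition hit_edge_family S F :=
  forall e, e \in F -> e \subset EG /\ ~~ [disjoint e & S].

Lemma hit_edge_family_init S :
  (forall X, ~ is_clique [set: V] (EG :\: S) t X) -> hit_edge_family S (F_init EG t).
Proof.
move=> freeS e /imsetP[X]; rewrite inE => /andP[/eqP cX sXE] ->; split=> //.
by apply: solution_meets_clique freeS _; split; rewrite ?subsetT.
Qed.

Lemma hit_edge_family_step S F F' :
  #|S| <= k -> rule_step EG t k F F' -> hit_edge_family S F -> hit_edge_family S F'.
Proof.
move=> leSk [x [y [Xs [Y [_ _ XsF sunXs ->]]]]] hitF e.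
have petalF i : EX (Xs i :|: [set x; y]) \in F by have := XsF i; rewrite inE => /andP[].
rewrite in_setU in_set1 => /orP[| /eqP ->]; first by rewrite inE => /andP[/hitF].
have coreS : ~~ [disjoint EX (Y :|: [set x; y]) & S].
  by apply: (sunflower_core_hit sunXs) => // i; have [] := hitF _ (petalF i).
split=> //.
have k_gt0 : 0 < k.
  apply: leq_trans leSk; rewrite lt0n cards_eq0; apply: contraNneq coreS => ->.
  by rewrite -setI_eq0 setI0.
have [_ sunI _] := sunXs.
have /sunI core0 : (ord0 : 'I_k.+1) != ord_max by rewrite -val_eqE /= eq_sym -lt0n.
apply: subset_trans (EXS _) (proj1 (hitF _ (petalF ord0))).
by rewrite -core0 setSU // subsetIl.
Qed.

Definition covers_cliques F :=
  forall X : {set V}, #|X| = t -> EX X \subset EG ->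
  exists W : {set V}, [/\ W \subset X, 1 < #|W| & EX W \in F].

Lemma covers_cliques_init : 1 < t -> covers_cliques (F_init EG t).
Proof.
move=> t_gt1 X cX sXE; exists X; split; rewrite ?cX //.
by apply/imsetP; exists X; rewrite // inE cX eqxx.
Qed.

Lemma covers_cliques_step F F' :
  simple_graph [set: V] EG -> rule_step EG t k F F' -> covers_cliques F -> covers_cliques F'.
Proof.
move=> EGsimple [x [y [Xs [Y [xyE _ _ _ ->]]]]] covF X cX sXE.
have [W [sWX W2 WF]] := covF X cX sXE.
set C := Y :|: [set x; y].
have C2 : 1 < #|C|.
  have [card_xy _] := EGsimple _ xyE.
  by apply: leq_trans (subset_leq_card (subsetUr Y _)); rewrite card_xy.
case: (boolP [exists Z : {set V}, (C \subset Z) && (EX W == EX Z)]) =>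
    [/existsP[Z /andP[sCZ /eqP EWZ]] | kept].
  exists C; split=> //; last by rewrite in_setU in_set1 eqxx orbT.
  apply: (subset_trans sCZ); apply: (subset_trans _ sWX).
  by rewrite EX_subset ?EWZ // (leq_trans C2) ?subset_leq_card.
by exists W; split; rewrite // in_setU; apply/orP; left; rewrite inE WF.
Qed.

End Invariants.

Section Blowup.
Variables (V : finType) (t : nat).
Implicit Types (X W f : {set V}) (e K : {set Wtype V t}).

Definition padV X : {set Wtype V t} := liftV t X :|: newV t X.

Lemma inl_padV X a : (inl a \in padV X) = (a \in X).
Proof.
rewrite in_setU mem_imset; last exact: inl_inj.
by case: (a \in X) => //; apply/imsetP=> -[].
Qed.

Lemma inr_padV X W i : inr (W, i) \in padV X -> W = X.
Proof. by case/setUP=> /imsetP[] // j _ [-> _]. Qed.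

Lemma padV_full X : #|X| = t -> padV X = liftV t X.
Proof.
move=> cX; apply/setUidPl/subsetP=> v /imsetP[i].
by rewrite inE cX subnn.
Qed.

Lemma card_ord_lt m : m <= t -> #|[set i : 'I_t | i < m]| = m.
Proof.
move=> le_mt.
have -> : [set i : 'I_t | i < m] = widen_ord le_mt @: [set: 'I_m].
  apply/setP=> i; rewrite inE; apply/idP/imsetP=> [lt_im | [j _ ->]]; last exact: (ltn_ord j).
  by exists (Ordinal lt_im); rewrite ?inE //; apply: val_inj.
rewrite card_imset ?cardsT ?card_ord // => i j /(congr1 val) ij.
exact: val_inj.
Qed.

Lemma card_padV X : #|X| <= t -> #|padV X| = t.
Proof.
move=> le_Xt; rewrite cardsU.
have -> : liftV t X :&: newV t X = set0.
  by apply/setP=> v; rewrite in_set0; apply/setIP=> -[/imsetP[a _ ->] /imsetP[]].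
rewrite cards0 subn0 card_imset; last exact: inl_inj.
by rewrite card_imset ?card_ord_lt ?leq_subr ?subnKC // => i j [].
Qed.

Lemma liftV_preim e : (forall p, inr p \notin e) -> liftV t (inl @^-1: e) = e.
Proof.
move=> noinr; apply/setP=> -[a | p]; last by rewrite (negbTE (noinr p)); apply/imsetP=> -[].
by rewrite mem_imset ?inE //; exact: inl_inj.
Qed.

Lemma card_preim_inl e : (forall p, inr p \notin e) -> #|inl @^-1: e| = #|e|.
Proof. by move/liftV_preim=> {2}<-; rewrite card_imset //; exact: inl_inj. Qed.

(* Any edge of [W] will do: every clique of [G] containing [W] contains it. *)
Definition proj_edge e : {set V} :=
  if [pick p | inr p \in e] is Some (W, _) then odflt set0 [pick f in EX W]
  else inl @^-1: e.

Lemma proj_edge_EX W e : 1 < #|W| -> e \in EX (padV W) -> proj_edge e \in EX W.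
Proof.
move=> W2; rewrite in_EX /proj_edge => /andP[seW ce].
case: pickP => [[W' i] /(subsetP seW)/inr_padV -> | noinr].
  case: pickP => // noEX.
  suff : W \subset set0 by rewrite subset0 => /eqP W0; rewrite W0 cards0 in W2.
  by apply: EX_subset W2 _; apply/subsetP=> f; rewrite noEX.
rewrite in_EX card_preim_inl ?ce ?andbT => [|p]; last exact: negbT (noinr p).
by apply/subsetP=> a; rewrite inE -inl_padV => /(subsetP seW).
Qed.

Variable F : {set {set {set V}}}.

Lemma padV_clique X :
  EX X \in F -> #|X| <= t -> is_clique (Gp_V t F) (Gp_E t F) t (padV X).
Proof.
move=> XF le_Xt; split; [| exact: card_padV |];
  move: le_Xt; rewrite leq_eqVlt => /predU1P[eqXt | ltXt].
- by rewrite padV_full // subsetU // (bigcup_sup X) // XF eqXt eqxx.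
- by rewrite subsetU // orbC (bigcup_sup X) // XF ltXt.
- by rewrite padV_full // subsetU // (bigcup_sup X) // XF eqXt eqxx.
- by rewrite subsetU // orbC (bigcup_sup X) // XF ltXt.
Qed.

Lemma GpV_inr W i :
  inr (W, i) \in Gp_V t F -> [/\ EX W \in F, #|W| <= t & inr (W, i) \in padV W].
Proof.
case/setUP=> /bigcupP[X /andP[XF ltXt] vX]; first by case/imsetP: vX.
have eWX := inr_padV vX; rewrite eWX in vX *.
by split=> //; exact: ltnW.
Qed.

Lemma GpE_padV e :
  e \in Gp_E t F -> exists X, [/\ EX X \in F, #|X| <= t & e \subset padV X].
Proof.
case/setUP=> /bigcupP[X /andP[XF cX] eX]; exists X; rewrite in_EX in eX.
  by rewrite padV_full (eqP cX) //; case/andP: eX.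
by rewrite ltnW //; case/andP: eX.
Qed.

Lemma GpE_lift f : liftV t f \in Gp_E t F -> exists2 X, EX X \in F & f \subset X.
Proof.
case/GpE_padV=> X [XF _ sfX]; exists X => //; apply/subsetP=> a af.
by rewrite -inl_padV (subsetP sfX) // imset_f.
Qed.

Lemma Gp_clique_inr K W i :
  is_clique (Gp_V t F) (Gp_E t F) t K -> inr (W, i) \in K -> K = padV W /\ EX W \in F.
Proof.
move=> [sKV cK sKE] vK; have [WF le_Wt vW] := GpV_inr (subsetP sKV _ vK).
split=> //; apply/eqP; rewrite eqEcard card_padV // cK leqnn andbT.
apply/subsetP=> u uK; have [-> // | nuv] := eqVneq u (inr (W, i)).
have uvK : [set u; inr (W, i)] \in EX K by rewrite set2_EX // uK vK.
have [X [_ _ uvX]] := GpE_padV (subsetP sKE _ uvK).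
have /(subsetP uvX)/inr_padV -> : inr (W, i) \in [set u; inr (W, i)] by rewrite !inE eqxx orbT.
by apply: (subsetP uvX); rewrite !inE eqxx.
Qed.

Lemma yes_Gp_of_hit_edge_family (EG S : {set {set V}}) k :
  (forall X, ~ is_clique [set: V] (EG :\: S) t X) -> #|S| <= k ->
  hit_edge_family EG S F -> Kt_free_del_yes (Gp_V t F) (Gp_E t F) t k.
Proof.
move=> freeS leSk hitF.
exists ((liftV t @: S) :&: Gp_E t F); split; [exact: subsetIr | exact: leq_card_imsetI |].
move=> K cliqueK; have [_ cK sKE] := cliqueK.
have cliqueGpK := is_cliqueS (subsetDl _ _) cliqueK.
have liftS_notin f : f \in S -> liftV t f \notin EX K.
  by move=> fS; apply/negP=> /(subsetP sKE); rewrite in_setD in_setI (imset_f (liftV t) fS) andNb.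
case: (boolP [exists p, inr p \in K]) => [/existsP[[W i] vK] | /existsPn noinr].
  have [KE WF] := Gp_clique_inr cliqueGpK vK.
  have [_] := hitF _ WF; rewrite -setI_eq0 => /set0Pn[f /setIP[fW fS]].
  move/negP: (liftS_notin f fS); apply; rewrite KE.
  exact: subsetP (EXS (subsetUl _ _)) _ (EX_imset inl_inj fW).
have KE : liftV t (inl @^-1: K) = K := liftV_preim noinr.
apply: (freeS (inl @^-1: K)); split; rewrite ?subsetT //.
  by rewrite card_preim_inl.
apply/subsetP=> f fK0.
have fK : liftV t f \in EX K by rewrite -KE; exact: EX_imset inl_inj fK0.
have [X XF sfX] := GpE_lift (subsetP (subset_trans sKE (subsetDl _ _)) _ fK).
have fX : f \in EX X by move: fK0; rewrite !in_EX sfX => /andP[_ ->].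
rewrite in_setD (subsetP (proj1 (hitF _ XF)) _ fX) andbT.
by apply/negP=> /liftS_notin; rewrite fK.
Qed.

Lemma yes_G_of_covers_cliques (EG : {set {set V}}) k :
  covers_cliques EG t F -> Kt_free_del_yes (Gp_V t F) (Gp_E t F) t k ->
  Kt_free_del_yes [set: V] EG t k.
Proof.
move=> covF [S' [_ leS'k freeS']].
exists ((proj_edge @: S') :&: EG); split; [exact: subsetIr | exact: leq_card_imsetI |].
move=> X [_ cX sXE]; have sXG := subset_trans sXE (subsetDl EG _).
have [W [sWX W2 WF]] := covF X cX sXG.
have le_Wt : #|W| <= t by rewrite -cX subset_leq_card.
have := solution_meets_clique freeS' (padV_clique WF le_Wt).
rewrite -setI_eq0 => /set0Pn[f /setIP[fW fS']].
have pX : proj_edge f \in EX X := subsetP (EXS sWX) _ (proj_edge_EX W2 fW).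
by move: (subsetP sXE _ pX); rewrite in_setD in_setI imset_f // (subsetP sXG _ pX).
Qed.

End Blowup.

Theorem lemma4 (V : finType) (EG : {set {set V}}) (t k : nat)
    (F' : {set {set {set V}}}) :
  simple_graph [set: V] EG ->
  2 <= t ->
  result_family EG t k F' ->
  Kt_free_del_yes [set: V] EG t k <->
  Kt_free_del_yes (Gp_V t F') (Gp_E t F') t k.
Proof.
move=> EGsimple t_gt1 resF'; split=> [[S [_ leSk freeS]] |].
  apply: (yes_Gp_of_hit_edge_family freeS leSk).
  apply: (result_family_ind (P := hit_edge_family EG S)) resF'.
    exact: hit_edge_family_init.
  by move=> F F''; apply: hit_edge_family_step.
apply: yes_G_of_covers_cliques.
apply: (result_family_ind (P := covers_cliques EG t)) resF'.
  exact: covers_cliques_init.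
by move=> F F''; apply: covers_cliques_step.
Qed.
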